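(* The sets $\{123,2413\}$ and $\{132,2314\}$ are forest-Wilf equivalent, and the sets $\{123,3142\}$ and $\{132,3124\}$ are forest-Wilf equivalent.
   Context: A rooted labeled forest on $[n]$ is an unordered forest on $n$ vertices, each component with a distinguished root, with distinct labels from $[n]$. For a permutation (pattern) $\pi$ of $[k]$, an instance of $\pi$ is a sequence of vertices $v_1,\dots,v_k$ with $v_i$ a strict ancestor of $v_{i+1}$ whose labels are in the same relative order as $\pi$; a forest avoids a set of patterns if it has no instance of any of them. Two sets $S,S'$ are forest-Wilf equivalent if for every $n\ge0$ the number of rooted labeled forests on $[n]$ avoiding $S$ equals the number avoiding $S'$. *)

From mathcomp Require Import all_boot.
Set Implicit Arguments. Unset Strict Implicit. Unset Printing Implicit Defensive.

(* A rooted labeled forest on [n] is encoded by its parent map: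
   vertex x : 'I_n (label x+1) has parent f x = Some y, or is a root (f x = None).
   Labels are the vertices themselves (shifted by one, which does not affect
   relative order). *)
Definition parent_map (n : nat) := {ffun 'I_n -> option 'I_n}.

Definition par n (f : parent_map n) (o : option 'I_n) : option 'I_n :=
  if o is Some x then f x else None.

(* acyclicity: every vertex reaches a root; in an n-vertex forest this happens
   within n parent steps. *)
Definition is_forest n (f : parent_map n) : bool :=
  [forall x : 'I_n, iter n (par f) (Some x) == None].

(* u is a strict ancestor of v (depths are < n, so k+1 <= n steps suffice). *)
Definition strict_anc n (f : parent_map n) (u v : 'I_n) : bool :=
  [exists k : 'I_n, iter k.+1 (par f) (Some v) == Some u].

(* A pattern is a permutation of [k] written in one-line notation as a seq nat. *)
Definition has_instance n (f : parent_map n) (pi : seq nat) : bool :=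
  [exists t : {ffun 'I_(size pi) -> 'I_n},
     [forall i : 'I_(size pi), forall j : 'I_(size pi),
        ((i.+1 == j :> nat) ==> strict_anc f (t i) (t j)) &&
        ((t i < t j) == (nth 0 pi i < nth 0 pi j))]].

Definition avoids n (f : parent_map n) (S : seq (seq nat)) : bool :=
  all (fun pi => ~~ has_instance f pi) S.

Definition num_avoiding (S : seq (seq nat)) (n : nat) : nat :=
  #|[pred f : parent_map n | is_forest f && avoids f S]|.

Definition forest_wilf_equiv (S S' : seq (seq nat)) : Prop :=
  forall n : nat, num_avoiding S n = num_avoiding S' n.

From mathcomp Require Import all_boot zify.
Set Implicit Arguments. Unset Strict Implicit. Unset Printing Implicit Defensive.

(* A vertex is low when one of its strict ancestors has a smaller label; every low vertex
   gets a key, a non-low strict ancestor with a smaller label: the ancestor of least label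
   for the first pair of sets, the topmost ancestor with a smaller label for the second.
   For each pair, a forest avoids the first set iff along every chain the labels of low
   vertices with a common key decrease, while a low descendant with a different key is
   smaller than every ancestor of the upper vertex; it avoids the second set iff the same
   holds with "decrease" replaced by "increase". Reversing the order of the labels inside
   each class of low vertices sharing a key preserves lowness and keys, hence turns one
   condition into the other; being an involution on forests, it is a bijection between the
   two sets of avoiding forests. *)

Section ReverseInSet.
Variables (n : nat) (G : {set 'I_n}).

Definition rev_in (x : 'I_n) : 'I_n := nth x (rev (enum G)) (index x (enum G)).

Lemma sorted_enum_set : sorted (fun x y : 'I_n => x < y) (enum G).
Proof.
rewrite /enum_mem; apply: sorted_filter; first by move=> y x z; apply: ltn_trans.
by rewrite -enumT; have := iota_ltn_sorted 0 n; rewrite -val_enum_ord sorted_map.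
Qed.

Lemma nth_enum_set_lt (x0 : 'I_n) i j : i < #|G| -> j < #|G| ->
  (nth x0 (enum G) i < nth x0 (enum G) j) = (i < j).
Proof.
rewrite cardE => ltiG ltjG.
have lt_nth := sorted_ltn_nth (fun y x z => @ltn_trans (val y) (val x) (val z)) x0 sorted_enum_set.
case: (ltngtP i j) => [ltij|ltji|->]; last by rewrite ltnn.
- exact: lt_nth.
- by apply/negbTE; rewrite -leqNgt ltnW // lt_nth.
Qed.

Lemma rev_in_notin x : x \notin G -> rev_in x = x.
Proof. by rewrite -mem_enum /rev_in => /memNindex ->; rewrite nth_default // size_rev. Qed.

Lemma rev_inE x : x \in G -> rev_in x = nth x (enum G) (#|G| - (index x (enum G)).+1).
Proof. by rewrite -mem_enum -index_mem /rev_in => xG; rewrite nth_rev // cardE. Qed.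

Lemma index_enum_set_lt x : x \in G -> index x (enum G) < #|G|.
Proof. by rewrite cardE index_mem mem_enum. Qed.

Lemma rev_in_mem x : x \in G -> rev_in x \in G.
Proof.
move=> xG; have := index_enum_set_lt xG.
by rewrite rev_inE // -mem_enum => ltxG; rewrite mem_nth // -cardE ltn_subrL (leq_ltn_trans _ ltxG).
Qed.

Lemma index_rev_in x : x \in G -> index (rev_in x) (enum G) = #|G| - (index x (enum G)).+1.
Proof.
move=> xG; have ltxG := index_enum_set_lt xG.
by rewrite rev_inE // index_uniq ?enum_uniq // -cardE ltn_subrL (leq_ltn_trans _ ltxG).
Qed.

Lemma rev_inK : {in G, involutive rev_in}.
Proof.
move=> x xG; have ltxG := index_enum_set_lt xG.
rewrite rev_inE ?rev_in_mem // index_rev_in //.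
have -> : #|G| - (#|G| - (index x (enum G)).+1).+1 = index x (enum G) by lia.
by rewrite nth_index // mem_enum.
Qed.

Lemma rev_in_lt : {in G &, forall x y, (rev_in x < rev_in y) = (y < x)}.
Proof.
move=> x y xG yG.
have [ltxG ltyG] := (index_enum_set_lt xG, index_enum_set_lt yG).
have mirror_lt i : i < #|G| -> #|G| - i.+1 < #|G| by lia.
rewrite !rev_inE // (set_nth_default x y) -?cardE ?mirror_lt //.
rewrite nth_enum_set_lt ?mirror_lt //.
rewrite -{2}(nth_index x (_ : x \in enum G)) ?mem_enum //.
rewrite -{2}(nth_index x (_ : y \in enum G)) ?mem_enum // nth_enum_set_lt //; lia.
Qed.
End ReverseInSet.

Record ancestry n (anc : rel 'I_n) : Prop := Ancestry {
  anc_trans : forall a b c, anc a b -> anc b c -> anc a c;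
  anc_irrefl : irreflexive anc;
  anc_comparable : forall a b c, anc a c -> anc b c -> [\/ a = b, anc a b | anc b a] }.

Definition order_like (xs pi : seq nat) :=
  forall i j, i < size pi -> j < size pi ->
    (nth 0 xs i < nth 0 xs j) = (nth 0 pi i < nth 0 pi j).

Ltac order_like_tac :=
  let like := fresh "like" in
  split=> [like | ?];
  [ have := like 0 1; have := like 0 2; have := like 0 3; have := like 1 0;
    have := like 1 2; have := like 1 3; have := like 2 0; have := like 2 1;
    have := like 2 3; have := like 3 0; have := like 3 1; have := like 3 2;
    rewrite /=; lia
  | move=> [|[|[|[|i]]]] [|[|[|[|j]]]] //=; lia ].

Lemma order_like_123 a b c : order_like [:: a; b; c] [:: 1; 2; 3] <-> a < b /\ b < c.
Proof. by order_like_tac. Qed.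

Lemma order_like_132 a b c : order_like [:: a; b; c] [:: 1; 3; 2] <-> a < c /\ c < b.
Proof. by order_like_tac. Qed.

Lemma order_like_2413 a b c d :
  order_like [:: a; b; c; d] [:: 2; 4; 1; 3] <-> c < a /\ a < d /\ d < b.
Proof. by order_like_tac. Qed.

Lemma order_like_2314 a b c d :
  order_like [:: a; b; c; d] [:: 2; 3; 1; 4] <-> c < a /\ a < b /\ b < d.
Proof. by order_like_tac. Qed.

Lemma order_like_3142 a b c d :
  order_like [:: a; b; c; d] [:: 3; 1; 4; 2] <-> b < d /\ d < a /\ a < c.
Proof. by order_like_tac. Qed.

Lemma order_like_3124 a b c d :
  order_like [:: a; b; c; d] [:: 3; 1; 2; 4] <-> b < c /\ c < a /\ a < d.
Proof. by order_like_tac. Qed.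

(* lia (through zify) case-splits on boolean hypotheses such as [has_smaller_anc lam x],
   which makes it very slow; only the arithmetic ones are kept. *)
Ltac lia_arith :=
  repeat match goal with H : is_true ?b |- _ =>
    lazymatch b with leq _ _ => fail | _ => clear H end end;
  lia.

Section Ancestry.
Variables (n : nat) (anc : rel 'I_n).
Hypothesis anc_ok : ancestry anc.
Let anc_tr := anc_trans anc_ok.
Let anc_irr := anc_irrefl anc_ok.
Let anc_cmp := anc_comparable anc_ok.

Definition has_smaller_anc (lam : 'I_n -> nat) x := [exists u, anc u x && (lam u < lam x)].

Definition is_min_anc (lam : 'I_n -> nat) x u :=
  anc u x && [forall v, anc v x ==> (lam u <= lam v)].

Definition is_top_smaller_anc (lam : 'I_n -> nat) x u :=
  [&& anc u x, lam u < lam x & [forall v, anc v u ==> (lam x < lam v)]].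

Definition same_key (key : rel 'I_n) x y := [exists u, key x u && key y u].

Definition key_spec (lam : 'I_n -> nat) (key : rel 'I_n) :=
  [/\ forall x, has_smaller_anc lam x -> exists u, key x u,
      forall x u u', key x u -> key x u' -> u = u',
      forall x u, has_smaller_anc lam x -> key x u -> anc u x /\ lam u < lam x &
      forall x u, has_smaller_anc lam x -> key x u -> ~~ has_smaller_anc lam u].

Definition key_layered (lam : 'I_n -> nat) (key : rel 'I_n) (b : bool) :=
  forall x c, has_smaller_anc lam x -> has_smaller_anc lam c -> anc x c ->
    (same_key key x c -> (lam c < lam x) = b) /\
    (~~ same_key key x c -> forall v, anc v x -> lam c < lam v).

Definition chain3 (lam : 'I_n -> nat) (p : seq nat) :=
  exists a b c, [/\ anc a b, anc b c & order_like [:: lam a; lam b; lam c] p].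

Definition chain4 (lam : 'I_n -> nat) (p : seq nat) :=
  exists a b c d,
    [/\ anc a b, anc b c, anc c d & order_like [:: lam a; lam b; lam c; lam d] p].

Lemma anc_neq a b : anc a b -> a <> b.
Proof. by move=> ab eab; move: ab; rewrite eab anc_irr. Qed.

Lemma same_keyP (key : rel 'I_n) x y :
  reflect (exists u, key x u /\ key y u) (same_key key x y).
Proof.
by apply: (iffP existsP) => [[u /andP[xu yu]] | [u [xu yu]]]; exists u => //; apply/andP.
Qed.

Lemma same_keyC (key : rel 'I_n) x y : same_key key x y = same_key key y x.
Proof. by apply: eq_existsb => u; rewrite andbC. Qed.

Section Labelling.
Variable lam : 'I_n -> nat.
Hypothesis lam_inj : injective lam.

Lemma lam_anc_neq x y : anc x y -> lam x <> lam y.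
Proof. by move=> /anc_neq xy /lam_inj. Qed.

Lemma has_smaller_ancP x :
  reflect (exists2 u, anc u x & lam u < lam x) (has_smaller_anc lam x).
Proof.
by apply: (iffP existsP) => [[u /andP[ux ltux]] | [u ux ltux]]; exists u => //; apply/andP.
Qed.

Lemma no_smaller_anc x v : ~~ has_smaller_anc lam x -> anc v x -> lam x <= lam v.
Proof.
by move=> /has_smaller_ancP no_v vx; rewrite leqNgt; apply/negP => ?; apply: no_v; exists v.
Qed.

Lemma key_specP (key : rel 'I_n) x : key_spec lam key -> has_smaller_anc lam x ->
  exists u, [/\ key x u, anc u x, lam u < lam x & ~~ has_smaller_anc lam u].
Proof.
case=> key_ex _ key_below key_min x_low; have [u xu] := key_ex x x_low.
by have [ux ltux] := key_below x u x_low xu; exists u; split; last exact: key_min xu.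
Qed.

Lemma key_spec_min_anc : key_spec lam (is_min_anc lam).
Proof.
split.
- move=> x /has_smaller_ancP[w wx _]; have [u ux u_min] := arg_minnP lam (P := anc^~ x) wx.
  by exists u; rewrite /is_min_anc ux; apply/forallP => v; apply/implyP; apply: u_min.
- move=> x u u' /andP[ux /forallP u_min] /andP[u'x /forallP u'_min]; apply: lam_inj.
  by have := implyP (u_min u') u'x; have := implyP (u'_min u) ux; lia_arith.
- move=> x u /has_smaller_ancP[w wx ltwx] /andP[ux /forallP u_min]; split => //.
  by have := implyP (u_min w) wx; lia_arith.
- move=> x u _ /andP[ux /forallP u_min]; apply/has_smaller_ancP => -[w wu].
  by have := implyP (u_min w) (anc_tr wu ux); lia_arith.
Qed.

Lemma key_spec_top_smaller_anc : key_spec lam (is_top_smaller_anc lam).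
Proof.
split.
- move=> x /has_smaller_ancP[w wx ltwx].
  pose depth u := #|[set v | anc v u]|.
  have [|u /andP[ux ltux] u_top] :=
    arg_minnP depth (P := fun u => anc u x && (lam u < lam x)) (i0 := w).
    by rewrite wx ltwx.
  exists u; rewrite /is_top_smaller_anc ux ltux; apply/forallP => v; apply/implyP => vu.
  rewrite ltn_neqAle eq_sym; apply/andP; split.
    by apply/eqP => /lam_inj exv; move: (anc_tr vu ux); rewrite exv anc_irr.
  rewrite leqNgt; apply/negP => ltvx; have := u_top v; rewrite (anc_tr vu ux) ltvx.
  move=> /(_ isT); rewrite leqNgt => /negP; apply; apply: proper_card; apply/properP.
  split; first by apply/subsetP => z; rewrite !inE => /anc_tr; apply.
  by exists v; rewrite !inE ?vu ?anc_irr.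
- move=> x u u' /and3P[ux ltux /forallP u_top] /and3P[u'x ltu'x /forallP u'_top].
  case: (anc_cmp ux u'x) => [// | uu' | u'u].
  + by have := implyP (u'_top u) uu'; lia_arith.
  + by have := implyP (u_top u') u'u; lia_arith.
- by move=> x u _ /and3P[].
- move=> x u _ /and3P[ux ltux /forallP u_top]; apply/has_smaller_ancP => -[w wu].
  by have := implyP (u_top w) wu; lia_arith.
Qed.

Lemma layered_desc_order (key : rel 'I_n) b a x c : key_layered lam key b ->
  anc a x -> anc x c -> lam a < lam x -> lam a < lam c -> (lam c < lam x) = b.
Proof.
move=> lay ax xc ltax ltac.
have x_low : has_smaller_anc lam x by apply/has_smaller_ancP; exists a.
have c_low : has_smaller_anc lam c by apply/has_smaller_ancP; exists a => //; apply: anc_tr xc.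
have [same diff] := lay x c x_low c_low xc.
case: (boolP (same_key key x c)) => [/same // | /diff/(_ a ax)].
by clear same diff; lia_arith.
Qed.

Lemma layered_no123 (key : rel 'I_n) : key_layered lam key true -> ~ chain3 lam [:: 1; 2; 3].
Proof.
move=> lay [a [b [c [ab bc /order_like_123[ltab ltbc]]]]].
by have := layered_desc_order lay ab bc ltab (ltn_trans ltab ltbc); lia_arith.
Qed.

Lemma layered_no132 (key : rel 'I_n) : key_layered lam key false -> ~ chain3 lam [:: 1; 3; 2].
Proof.
move=> lay [a [b [c [ab bc /order_like_132[ltac ltcb]]]]].
by have := layered_desc_order lay ab bc (ltn_trans ltac ltcb) ltac; lia_arith.
Qed.

Lemma no123_desc_lt x c :
  ~ chain3 lam [:: 1; 2; 3] -> has_smaller_anc lam x -> anc x c -> lam c < lam x.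
Proof.
move=> no123 /has_smaller_ancP[u ux ltux] xc; have := lam_anc_neq xc.
rewrite ltnNge => neq; apply/negP => le_xc; apply: no123.
by exists u, x, c; split => //; apply/order_like_123; lia_arith.
Qed.

Lemma min_anc_mid c d u :
  is_min_anc lam d u -> anc u c -> anc c d -> is_min_anc lam c u /\ lam u < lam c.
Proof.
move=> /andP[_ /forallP u_le] uc cd; split.
  by rewrite /is_min_anc uc; apply/forallP => v; apply/implyP => /anc_tr/(_ cd)/(implyP (u_le v)).
by have := implyP (u_le c) cd; have := lam_anc_neq uc; lia_arith.
Qed.

Lemma min_anc_below x c ux w :
  has_smaller_anc lam x -> has_smaller_anc lam c -> anc x c ->
  is_min_anc lam x ux -> is_min_anc lam c w -> ~~ same_key (is_min_anc lam) x c ->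
  anc x w /\ lam w < lam ux.
Proof.
move=> x_low c_low xc xux cw diff.
have [_ _ key_below key_min] := key_spec_min_anc.
have [ux_x _] := key_below _ _ x_low xux.
move: (cw) => /andP[wc /forallP w_le].
have xw : anc x w.
  case: (anc_cmp wc xc) => [ewx | wx | //].
    by move: x_low; rewrite -ewx (negbTE (key_min _ _ c_low cw)).
  case/negP: diff; apply/same_keyP; exists w; split => //.
  by have [] := min_anc_mid cw wx xc.
split => //; have := implyP (w_le ux) (anc_tr ux_x xc).
by have := lam_anc_neq (anc_tr ux_x xw); lia_arith.
Qed.

Lemma top_smaller_anc_mid y a u : is_top_smaller_anc lam y u ->
  anc u a -> lam u < lam a -> lam a < lam y -> is_top_smaller_anc lam a u.
Proof.
move=> /and3P[_ _ /forallP u_top] ua ltua ltay; rewrite /is_top_smaller_anc ua ltua.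
by apply/forallP => v; apply/implyP => /(implyP (u_top v)); apply: ltn_trans.
Qed.

Lemma no_123_2413_iff_layered :
  ~ chain3 lam [:: 1; 2; 3] /\ ~ chain4 lam [:: 2; 4; 1; 3] <->
  key_layered lam (is_min_anc lam) true.
Proof.
split=> [[no123 no2413] x c x_low c_low xc | lay].
  have ltcx := no123_desc_lt no123 x_low xc.
  split=> [_ | diff v vx]; first exact/idP.
  have [ux [xux ux_x ltux _]] := key_specP key_spec_min_anc x_low.
  have [w [cw wc _ _]] := key_specP key_spec_min_anc c_low.
  have [xw ltwu] := min_anc_below x_low c_low xc xux cw diff.
  have le_uv : lam ux <= lam v by move: xux => /andP[_ /forallP/(_ v)/implyP]; apply.
  have := lam_anc_neq (anc_tr vx xc); rewrite ltnNge => neq.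
  apply/negP => le_vc; apply: no2413; exists ux, x, w, c.
  by split => //; apply/order_like_2413; lia_arith.
split; first exact: layered_no123 lay.
move=> [a [b [c [d [ab bc cd /order_like_2413[ltca [ltad ltdb]]]]]]].
have b_low : has_smaller_anc lam b by apply/has_smaller_ancP; exists a => //; lia_arith.
have d_low : has_smaller_anc lam d by apply/has_smaller_ancP; exists c => //; lia_arith.
case: (boolP (same_key (is_min_anc lam) b d)) => [/same_keyP[u [/andP[ub _] du]] | diff_bd].
  have [cu ltuc] := min_anc_mid du (anc_tr ub bc) cd.
  have c_low : has_smaller_anc lam c.
    by apply/has_smaller_ancP; exists u => //; apply: anc_tr ub bc.
  have same_cd : same_key (is_min_anc lam) c d by apply/same_keyP; exists u.
  by have := (lay c d c_low d_low cd).1 same_cd; lia_arith.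
by have := (lay b d b_low d_low (anc_tr bc cd)).2 diff_bd a ab; lia_arith.
Qed.

Lemma no_132_2314_iff_layered :
  ~ chain3 lam [:: 1; 3; 2] /\ ~ chain4 lam [:: 2; 3; 1; 4] <->
  key_layered lam (is_min_anc lam) false.
Proof.
have [_ _ key_below _] := key_spec_min_anc.
split=> [[no132 no2314] x c x_low c_low xc | lay].
  have [ux [xux ux_x ltux _]] := key_specP key_spec_min_anc x_low.
  split=> [/same_keyP[u [xu cu]] | diff v vx].
    have [[u_x _] [_ ltuc]] := (key_below _ _ x_low xu, key_below _ _ c_low cu).
    apply/negbTE/negP => ltcx; apply: no132; exists u, x, c.
    by split => //; apply/order_like_132; lia_arith.
  have le_uv : lam ux <= lam v by move: xux => /andP[_ /forallP/(_ v)/implyP]; apply.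
  have := lam_anc_neq (anc_tr vx xc); have := lam_anc_neq xc.
  rewrite ltnNge => neq_xc neq_vc; apply/negP => le_vc.
  case: (ltnP (lam c) (lam x)) => [ltcx | le_xc].
    by apply: no132; exists ux, x, c; split => //; apply/order_like_132; lia_arith.
  have [w [cw wc _ _]] := key_specP key_spec_min_anc c_low.
  have [xw ltwu] := min_anc_below x_low c_low xc xux cw diff.
  by apply: no2314; exists ux, x, w, c; split => //; apply/order_like_2314; lia_arith.
split; first exact: layered_no132 lay.
move=> [a [b [c [d [ab bc cd /order_like_2314[ltca [ltab ltbd]]]]]]].
have b_low : has_smaller_anc lam b by apply/has_smaller_ancP; exists a.
have d_low : has_smaller_anc lam d by apply/has_smaller_ancP; exists c => //; lia_arith.
case: (boolP (same_key (is_min_anc lam) b d)) => [/same_keyP[u [bu du]] | diff_bd].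
  have ub : anc u b by case/andP: bu.
  have [cu ltuc] := min_anc_mid du (anc_tr ub bc) cd.
  have c_low : has_smaller_anc lam c.
    by apply/has_smaller_ancP; exists u => //; apply: anc_tr ub bc.
  have same_bc : same_key (is_min_anc lam) b c by apply/same_keyP; exists u.
  by have := (lay b c b_low c_low bc).1 same_bc; lia_arith.
by have := (lay b d b_low d_low (anc_tr bc cd)).2 diff_bd a ab; lia_arith.
Qed.

Lemma no_123_3142_iff_layered :
  ~ chain3 lam [:: 1; 2; 3] /\ ~ chain4 lam [:: 3; 1; 4; 2] <->
  key_layered lam (is_top_smaller_anc lam) true.
Proof.
split=> [[no123 no3142] x c x_low c_low xc | lay].
  have ltcx := no123_desc_lt no123 x_low xc.
  split=> [_ | diff v vx]; first exact/idP.
  have := lam_anc_neq (anc_tr vx xc); rewrite ltnNge => neq_vc; apply/negP => le_vc.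
  have [uc [cuc uc_c ltuc _]] := key_specP key_spec_top_smaller_anc c_low.
  move: (cuc) => /and3P[_ _ /forallP uc_top].
  have uc_x : anc uc x.
    case: (anc_cmp (anc_tr vx xc) uc_c) => [<- // | vuc | ucv]; last exact: anc_tr ucv vx.
    by have := implyP (uc_top v) vuc; lia_arith.
  have [ux [xux ux_x ltux _]] := key_specP key_spec_top_smaller_anc x_low.
  move: (xux) => /and3P[_ _ /forallP ux_top].
  case: (anc_cmp ux_x uc_x) => [eux | uxuc | ucux].
  - by case/negP: diff; apply/same_keyP; exists uc; rewrite -{1}eux.
  - have := implyP (uc_top ux) uxuc => ltcux.
    by apply: no3142; exists ux, uc, x, c; split => //; apply/order_like_3142; lia_arith.
  - by have := implyP (ux_top uc) ucux; lia_arith.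
split; first exact: layered_no123 lay.
move=> [a [b [c [d [ab bc cd /order_like_3142[ltbd [ltda ltac]]]]]]].
have c_low : has_smaller_anc lam c by apply/has_smaller_ancP; exists b => //; lia_arith.
have d_low : has_smaller_anc lam d by apply/has_smaller_ancP; exists b => //; apply: anc_tr cd.
case: (boolP (same_key (is_top_smaller_anc lam) c d)) => [| diff_cd]; last first.
  by have := (lay c d c_low d_low cd).2 diff_cd b bc; lia_arith.
move=> /same_keyP[u [cu du]].
move: (cu) (du) => /and3P[_ _ /forallP u_top] /and3P[ud ltud _].
case: (anc_cmp ud (anc_tr ab (anc_tr bc cd))) => [eua | ua | au].
- by move: ltud; rewrite eua; lia_arith.
- have au : is_top_smaller_anc lam a u by apply: top_smaller_anc_mid cu ua _ ltac; lia_arith.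
  have a_low : has_smaller_anc lam a by apply/has_smaller_ancP; exists u => //; lia_arith.
  have same_ac : same_key (is_top_smaller_anc lam) a c by apply/same_keyP; exists u.
  by have := (lay a c a_low c_low (anc_tr ab bc)).1 same_ac; lia_arith.
- by have := implyP (u_top a) au; lia_arith.
Qed.

Lemma no_132_3124_iff_layered :
  ~ chain3 lam [:: 1; 3; 2] /\ ~ chain4 lam [:: 3; 1; 2; 4] <->
  key_layered lam (is_top_smaller_anc lam) false.
Proof.
have [_ _ key_below _] := key_spec_top_smaller_anc.
split=> [[no132 no3124] x c x_low c_low xc | lay].
  split=> [/same_keyP[u [xu cu]] | diff v vx].
    have [[u_x _] [_ ltuc]] := (key_below _ _ x_low xu, key_below _ _ c_low cu).
    apply/negbTE/negP => ltcx; apply: no132; exists u, x, c.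
    by split => //; apply/order_like_132; lia_arith.
  have := lam_anc_neq (anc_tr vx xc); have := lam_anc_neq xc.
  rewrite ltnNge => neq_xc neq_vc; apply/negP => le_vc.
  case: (ltnP (lam c) (lam x)) => [ltcx | le_xc].
    by apply: no132; exists v, x, c; split => //; apply/order_like_132; lia_arith.
  have [ux [xux ux_x ltux _]] := key_specP key_spec_top_smaller_anc x_low.
  have [uc [cuc uc_c ltuc _]] := key_specP key_spec_top_smaller_anc c_low.
  move: (xux) (cuc) => /and3P[_ _ /forallP ux_top] /and3P[_ _ /forallP uc_top].
  case: (anc_cmp (anc_tr ux_x xc) uc_c) => [eux | uxuc | ucux].
  - by case/negP: diff; apply/same_keyP; exists uc; rewrite -{1}eux.
  - by have := implyP (uc_top ux) uxuc; lia_arith.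
  - have := implyP (ux_top uc) ucux => ltxuc.
    by apply: no3124; exists uc, ux, x, c; split => //; apply/order_like_3124; lia_arith.
split; first exact: layered_no132 lay.
move=> [a [b [c [d [ab bc cd /order_like_3124[ltbc [ltca ltad]]]]]]].
have c_low : has_smaller_anc lam c by apply/has_smaller_ancP; exists b.
have d_low : has_smaller_anc lam d.
  by apply/has_smaller_ancP; exists b; [apply: anc_tr cd | lia_arith].
case: (boolP (same_key (is_top_smaller_anc lam) c d)) => [| diff_cd]; last first.
  by have := (lay c d c_low d_low cd).2 diff_cd b bc; lia_arith.
move=> /same_keyP[u [cu du]].
move: (cu) (du) => /and3P[_ ltuc _] /and3P[ud _ /forallP u_top].
case: (anc_cmp ud (anc_tr ab (anc_tr bc cd))) => [eua | ua | au].
- by move: ltuc; rewrite eua; lia_arith.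
- have au : is_top_smaller_anc lam a u by apply: top_smaller_anc_mid du ua _ ltad; lia_arith.
  have a_low : has_smaller_anc lam a by apply/has_smaller_ancP; exists u => //; lia_arith.
  have same_ac : same_key (is_top_smaller_anc lam) a c by apply/same_keyP; exists u.
  by have := (lay a c a_low c_low (anc_tr ab bc)).1 same_ac; lia_arith.
- by have := implyP (u_top a) au; lia_arith.
Qed.
End Labelling.

Lemma same_key_eq (lam lam' : 'I_n -> nat) (key key' : rel 'I_n) x u0 :
  key_spec lam key -> key_spec lam' key' -> key x u0 -> key' x u0 ->
  forall u, key' x u = key x u.
Proof.
case=> _ uniq _ _ [_ uniq' _ _] xu0 xu0' u.
by apply/idP/idP => [/(uniq' _ _ _ xu0') | /(uniq _ _ _ xu0)] <-.
Qed.

Local Notation label := (@nat_of_ord n).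

Section Flip.
Variable key : rel 'I_n.
Hypothesis key_ok : key_spec label key.

Definition key_class x := [set y | has_smaller_anc label y && same_key key y x].

Definition flip x := rev_in (key_class x) x.

Definition flip_label x : nat := flip x.

Lemma same_key_refl x : has_smaller_anc label x -> same_key key x x.
Proof. by case: key_ok => key_ex _ _ _ /key_ex[u xu]; apply/same_keyP; exists u. Qed.

Lemma same_key_trans y x z : same_key key x y -> same_key key y z -> same_key key x z.
Proof.
case: key_ok => _ uniq _ _ /same_keyP[u [xu yu]] /same_keyP[u' [yu' zu']].
by rewrite -(uniq _ _ _ yu yu') in zu'; apply/same_keyP; exists u.
Qed.

Lemma key_class_eq x y : same_key key x y -> key_class x = key_class y.
Proof.
move=> xy; apply/setP => z; rewrite !inE; case: (has_smaller_anc _ z) => //=.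
apply/idP/idP => [/same_key_trans | /same_key_trans]; apply => //.
by rewrite same_keyC.
Qed.

Lemma mem_key_class x : has_smaller_anc label x -> x \in key_class x.
Proof. by move=> x_low; rewrite inE x_low same_key_refl. Qed.

Lemma flip_id x : ~~ has_smaller_anc label x -> flip x = x.
Proof. by move=> x_min; rewrite /flip rev_in_notin // inE (negbTE x_min). Qed.

Lemma flip_key_class x : has_smaller_anc label x -> flip x \in key_class x.
Proof. by move/mem_key_class/rev_in_mem. Qed.

Lemma flip_low x : has_smaller_anc label (flip x) = has_smaller_anc label x.
Proof.
case: (boolP (has_smaller_anc label x)) => [x_low | x_min].
  by have := flip_key_class x_low; rewrite inE => /andP[->].
by rewrite (flip_id x_min) (negbTE x_min).
Qed.

Lemma same_key_flip x y : has_smaller_anc label x -> has_smaller_anc label y ->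
  same_key key (flip x) (flip y) = same_key key x y.
Proof.
move=> x_low y_low; have := flip_key_class x_low; have := flip_key_class y_low.
rewrite !inE => /andP[_ fy_y] /andP[_ fx_x].
have [x_fx y_fy] : same_key key x (flip x) /\ same_key key y (flip y).
  by rewrite !(same_keyC _ _ (flip _)).
apply/idP/idP => [fxy | xy]; first exact: same_key_trans (same_key_trans x_fx fxy) fy_y.
exact: same_key_trans (same_key_trans fx_x xy) y_fy.
Qed.

Lemma flipK : involutive flip.
Proof.
move=> x; case: (boolP (has_smaller_anc label x)) => [x_low | x_min]; last by rewrite !flip_id.
have := flip_key_class x_low; rewrite inE => /andP[_ /key_class_eq eq_class].
by rewrite {1}/flip eq_class rev_inK // mem_key_class.
Qed.

Lemma flip_label_inj : injective flip_label.
Proof. by move=> x y /ord_inj/(can_inj flipK). Qed.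

Lemma flip_lt x y : has_smaller_anc label x -> has_smaller_anc label y ->
  same_key key x y -> (flip x < flip y) = (y < x).
Proof.
move=> x_low y_low xy; rewrite /flip (key_class_eq xy) rev_in_lt ?mem_key_class //.
by rewrite inE x_low.
Qed.

Lemma flip_key x u : has_smaller_anc label x -> key x u -> key (flip x) u.
Proof.
move=> /flip_key_class; rewrite inE => /andP[_ /same_keyP[w [fxw xw]]] xu.
by case: key_ok => _ uniq _ _; rewrite (uniq _ _ _ xu xw).
Qed.

Lemma key_lt_flip x u : has_smaller_anc label x -> key x u -> u < flip x.
Proof.
move=> x_low xu; have := flip_key_class x_low; rewrite inE => /andP[fx_low _].
by case: key_ok => _ _ key_below _; case: (key_below _ _ fx_low (flip_key x_low xu)).
Qed.

(* Either flip v = v, or flip v lies above the key of v, which is an ancestor of v. *)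
Lemma flip_label_lb m (v : 'I_n) : m <= v -> (forall w, anc w v -> m <= w) -> m <= flip_label v.
Proof.
move=> le_mv le_m_anc; case: (boolP (has_smaller_anc label v)) => [v_low | v_min].
  have [w [vw wv _ _]] := key_specP key_ok v_low.
  exact: leq_trans (le_m_anc w wv) (ltnW (key_lt_flip v_low vw)).
by rewrite /flip_label flip_id.
Qed.

Lemma has_smaller_anc_flip x : has_smaller_anc flip_label x = has_smaller_anc label x.
Proof.
case: (boolP (has_smaller_anc label x)) => [x_low | x_min].
  have [u [xu ux _ u_min]] := key_specP key_ok x_low.
  apply/has_smaller_ancP; exists u => //.
  by rewrite /flip_label (flip_id u_min) (key_lt_flip x_low xu).
apply/negbTE/has_smaller_ancP => -[u ux]; apply/negP.
rewrite -leqNgt {1}/flip_label (flip_id x_min).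
apply: flip_label_lb => [|w wu]; first exact: no_smaller_anc x_min ux.
exact: no_smaller_anc x_min (anc_tr wu ux).
Qed.

Lemma layered_key_below b x c u : key_layered label key b ->
  has_smaller_anc label x -> has_smaller_anc label c -> anc x c ->
  ~~ same_key key x c -> key c u -> anc x u.
Proof.
move=> lay x_low c_low xc diff cu.
case: key_ok => _ _ key_below key_min; have [uc ltuc] := key_below _ _ c_low cu.
case: (anc_cmp uc xc) => [eux | ux | //].
  by move: (key_min _ _ c_low cu); rewrite eux x_low.
by have := (lay x c x_low c_low xc).2 diff u ux; lia_arith.
Qed.

Lemma flip_lt_diff_key b x c v : key_layered label key b ->
  has_smaller_anc label x -> has_smaller_anc label c -> anc x c ->
  ~~ same_key key x c -> anc v x -> flip c < flip_label v.
Proof.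
move=> lay x_low c_low xc diff vx.
have [u [cu _ _ _]] := key_specP key_ok c_low.
have := flip_key_class c_low; rewrite inE => /andP[fc_low fc_c].
have fcu := flip_key c_low cu.
have x_fc : anc x (flip c).
  case: key_ok => _ _ key_below _; have [u_fc _] := key_below _ _ fc_low fcu.
  exact: anc_tr (layered_key_below lay x_low c_low xc diff cu) u_fc.
have diff' : ~~ same_key key x (flip c).
  by apply: contra diff => /same_key_trans; apply.
have below := (lay x (flip c) x_low fc_low x_fc).2 diff'.
by apply: flip_label_lb => [|w wv]; apply: below => //; apply: anc_tr wv vx.
Qed.

Lemma layered_flip b (key' : rel 'I_n) : key_layered label key b ->
  (forall x u, has_smaller_anc label x -> key' x u = key x u) ->
  key_layered flip_label key' (~~ b).
Proof.
move=> lay key'E x c; rewrite !has_smaller_anc_flip => x_low c_low xc.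
have -> : same_key key' x c = same_key key x c.
  by apply: eq_existsb => u; rewrite !key'E.
split=> [same | diff v vx]; last exact: flip_lt_diff_key lay x_low c_low xc diff vx.
rewrite /flip_label flip_lt 1?same_keyC //.
have := (lay x c x_low c_low xc).1 same; have := lam_anc_neq (@ord_inj n) xc.
by clear lay; case: b; lia_arith.
Qed.
End Flip.

Lemma min_anc_flip x u : has_smaller_anc label x ->
  is_min_anc (flip_label (is_min_anc label)) x u = is_min_anc label x u.
Proof.
have key_ok := key_spec_min_anc (@ord_inj n).
move=> x_low; have [u0 [xu0 u0x _ u0_min]] := key_specP key_ok x_low.
have xu0' : is_min_anc (flip_label (is_min_anc label)) x u0.
  rewrite /is_min_anc u0x /flip_label (flip_id _ u0_min).
  move: (xu0) => /andP[_ /forallP u0_le]; apply/forallP => v; apply/implyP => vx.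
  apply: (flip_label_lb key_ok) => [|w wv]; first exact: implyP (u0_le v) vx.
  exact: implyP (u0_le w) (anc_tr wv vx).
exact: same_key_eq key_ok (key_spec_min_anc (flip_label_inj key_ok)) xu0 xu0' u.
Qed.

Lemma top_smaller_anc_flip x u : has_smaller_anc label x ->
  is_top_smaller_anc (flip_label (is_top_smaller_anc label)) x u =
  is_top_smaller_anc label x u.
Proof.
have key_ok := key_spec_top_smaller_anc (@ord_inj n).
move=> x_low; have [u0 [xu0 u0x _ u0_min]] := key_specP key_ok x_low.
have xu0' : is_top_smaller_anc (flip_label (is_top_smaller_anc label)) x u0.
  rewrite /is_top_smaller_anc u0x {1}/flip_label (flip_id _ u0_min).
  rewrite (key_lt_flip key_ok x_low xu0) /=.
  move: (flip_key key_ok x_low xu0) => /and3P[_ _ /forallP fx_top].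
  apply/forallP => w; apply/implyP => wu0.
  apply: (flip_label_lb key_ok) => [|w' w'w]; first exact: implyP (fx_top w) wu0.
  exact: implyP (fx_top w') (anc_tr w'w wu0).
exact: same_key_eq key_ok (key_spec_top_smaller_anc (flip_label_inj key_ok)) xu0 xu0' u.
Qed.
End Ancestry.

Lemma eq_flip n (anc1 anc2 : rel 'I_n) (key1 key2 : rel 'I_n) :
  has_smaller_anc anc1 (@nat_of_ord n) =1 has_smaller_anc anc2 (@nat_of_ord n) ->
  (forall x y, has_smaller_anc anc2 (@nat_of_ord n) x -> has_smaller_anc anc2 (@nat_of_ord n) y ->
     same_key key1 x y = same_key key2 x y) ->
  flip anc1 key1 =1 flip anc2 key2.
Proof.
move=> lowE keyE x; case: (boolP (has_smaller_anc anc2 (@nat_of_ord n) x)) => [x_low | x_min].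
  rewrite /flip; have -> // : key_class anc1 key1 x = key_class anc2 key2 x.
  apply/setP => y; rewrite !inE lowE.
  by case: (boolP (has_smaller_anc anc2 _ y)) => //= y_low; rewrite keyE.
by rewrite !flip_id ?lowE.
Qed.

Section Relabel.
Variables (n : nat) (anc anc' : rel 'I_n) (s : 'I_n -> 'I_n).
Hypothesis sK : involutive s.
Hypothesis anc'E : forall u v, anc' u v = anc (s u) (s v).
Variables lam lam' : 'I_n -> nat.
Hypothesis lam'E : forall u, lam' (s u) = lam u.

Lemma existsb_relabel (p : pred 'I_n) : [exists u, p u] = [exists u, p (s u)].
Proof.
apply/existsP/existsP => [[u pu] | [u psu]]; last by exists (s u).
by exists (s u); rewrite sK.
Qed.

Lemma forallb_relabel (p : pred 'I_n) : [forall u, p u] = [forall u, p (s u)].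
Proof. by apply: negb_inj; rewrite !negb_forall existsb_relabel. Qed.

Lemma chain3_relabel p : chain3 anc' lam p <-> chain3 anc lam' p.
Proof.
split=> [[a [b [c [ab bc abc]]]] | [a [b [c [ab bc abc]]]]].
  by exists (s a), (s b), (s c); rewrite !lam'E -!anc'E.
have lamE u : lam (s u) = lam' u by rewrite -lam'E sK.
by exists (s a), (s b), (s c); rewrite !anc'E !sK !lamE.
Qed.

Lemma chain4_relabel p : chain4 anc' lam p <-> chain4 anc lam' p.
Proof.
split=> [[a [b [c [d [ab bc cd abcd]]]]] | [a [b [c [d [ab bc cd abcd]]]]]].
  by exists (s a), (s b), (s c), (s d); rewrite !lam'E -!anc'E.
have lamE u : lam (s u) = lam' u by rewrite -lam'E sK.
by exists (s a), (s b), (s c), (s d); rewrite !anc'E !sK !lamE.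
Qed.

Lemma has_smaller_anc_relabel x :
  has_smaller_anc anc' lam x = has_smaller_anc anc lam' (s x).
Proof.
rewrite /has_smaller_anc existsb_relabel; apply: eq_existsb => u.
by rewrite anc'E !sK -(lam'E (s u)) -(lam'E x) sK.
Qed.

Lemma min_anc_relabel x u : is_min_anc anc' lam x u = is_min_anc anc lam' (s x) (s u).
Proof.
rewrite /is_min_anc anc'E forallb_relabel; congr (_ && _); apply: eq_forallb => v.
by rewrite anc'E sK -(lam'E u) -(lam'E (s v)) sK.
Qed.

Lemma top_smaller_anc_relabel x u :
  is_top_smaller_anc anc' lam x u = is_top_smaller_anc anc lam' (s x) (s u).
Proof.
rewrite /is_top_smaller_anc anc'E -(lam'E x) -(lam'E u) forallb_relabel.
by congr [&& _, _ & _]; apply: eq_forallb => v; rewrite anc'E sK -(lam'E (s v)) sK.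
Qed.
End Relabel.

Section Forest.
Variables (n : nat) (f : parent_map n).
Hypothesis f_forest : is_forest f.

Lemma iter_par_None k : iter k (par f) None = None.
Proof. by elim: k => //= k ->. Qed.

Lemma iter_par_ge x k : n <= k -> iter k (par f) (Some x) = None.
Proof.
move=> le_nk; rewrite -(subnK le_nk) iterD.
by move/forallP: f_forest => /(_ x) /eqP ->; rewrite iter_par_None.
Qed.

Lemma strict_ancP u v :
  reflect (exists k, iter k.+1 (par f) (Some v) = Some u) (strict_anc f u v).
Proof.
apply: (iffP existsP) => [[k /eqP uv] | [k uv]]; first by exists k.
have lt_kn : k < n.
  by rewrite ltnNge; apply/negP => /leqW le_nk; rewrite iter_par_ge in uv.
by exists (Ordinal lt_kn); apply/eqP.
Qed.

Lemma forest_ancestry : ancestry (strict_anc f).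
Proof.
split.
- move=> a b c /strict_ancP[k1 ab] /strict_ancP[k2 bc]; apply/strict_ancP.
  by exists (k1 + k2.+1); rewrite -addSn iterD bc ab.
- move=> a; apply/negbTE/negP => /strict_ancP[k aa].
  have iter_aa m : iter (m * k.+1) (par f) (Some a) = Some a.
    by elim: m => // m IHm; rewrite mulSn iterD IHm aa.
  by move: (iter_aa n); rewrite iter_par_ge // leq_pmulr.
- move=> a b c /strict_ancP[k1 ac] /strict_ancP[k2 bc].
  case: (ltngtP k1 k2) => [lt12 | lt21 | e12].
  + apply: Or33; apply/strict_ancP; exists (k2 - k1).-1.
    by rewrite -bc -ac -iterD prednK ?subn_gt0 // addnS subnK // ltnW.
  + apply: Or32; apply/strict_ancP; exists (k1 - k2).-1.
    by rewrite -bc -ac -iterD prednK ?subn_gt0 // addnS subnK // ltnW.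
  + by apply: Or31; move: bc; rewrite -e12 ac => -[].
Qed.
End Forest.

Section RelabelForest.
Variables (n : nat) (s : 'I_n -> 'I_n).

Definition relabel (f : parent_map n) : parent_map n := [ffun y => omap s (f (s y))].

Hypothesis sK : involutive s.

Lemma iter_par_relabel f k y :
  iter k (par (relabel f)) (Some y) = omap s (iter k (par f) (Some (s y))).
Proof.
elim: k => [|k IHk] /=; first by rewrite sK.
by rewrite IHk; case: (iter k _ _) => [z|] //=; rewrite ffunE sK.
Qed.

Lemma strict_anc_relabel f u v : strict_anc (relabel f) u v = strict_anc f (s u) (s v).
Proof.
apply: eq_existsb => k; rewrite iter_par_relabel.
by case: (iter _ _ _) => [z|] //=; apply/eqP/eqP => [[<-] | [->]]; rewrite sK.
Qed.

Lemma is_forest_relabel f : is_forest (relabel f) = is_forest f.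
Proof.
apply/forallP/forallP => f_forest x; last by rewrite iter_par_relabel (eqP (f_forest (s x))).
by move: (f_forest (s x)); rewrite iter_par_relabel sK; case: (iter _ _ _).
Qed.

Lemma relabelK : involutive relabel.
Proof. by move=> f; apply/ffunP => y; rewrite !ffunE sK; case: (f y) => //= z; rewrite sK. Qed.
End RelabelForest.

Lemma eq_relabel n (s1 s2 : 'I_n -> 'I_n) : s1 =1 s2 -> relabel s1 =1 relabel s2.
Proof.
by move=> s12 f; apply/ffunP => y; rewrite !ffunE s12; case: (f _) => //= z; rewrite s12.
Qed.

Section Instances.
Variables (n : nat) (f : parent_map n).
Local Notation label := (@nat_of_ord n).

Lemma has_instanceP pi : has_instance f pi <->
  exists t : seq 'I_n,
    [/\ size t = size pi, sorted (strict_anc f) t & order_like (map label t) pi].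
Proof.
split=> [/existsP[t0 /forallP t0P] | [t [size_t sorted_t like_t]]].
  have t0E x0 i (lt_i : i < size pi) : nth x0 (codom t0) i = t0 (Ordinal lt_i).
    by rewrite (nth_map (Ordinal lt_i)) ?size_enum_ord // (nth_ord_enum _ (Ordinal lt_i)).
  have size_t0 : size (codom t0) = size pi by rewrite size_codom card_ord.
  exists (codom t0); split => //.
    case E: (codom t0) => [// | x0 t']; rewrite -E.
    apply/(sortedP x0) => i; rewrite size_t0 => lt_i1.
    rewrite (t0E _ _ (ltnW lt_i1)) (t0E _ _ lt_i1).
    by have /andP[/implyP -> //] := forallP (t0P (Ordinal (ltnW lt_i1))) (Ordinal lt_i1).
  move=> i j lt_i lt_j; rewrite !(nth_map (t0 (Ordinal lt_i))) ?size_t0 //.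
  rewrite (t0E _ _ lt_i) (t0E _ _ lt_j).
  by have /andP[_ /eqP] := forallP (t0P (Ordinal lt_i)) (Ordinal lt_j).
have /eqP size_t' := size_t; pose tt := Tuple size_t'.
apply/existsP; exists [ffun i => tnth tt i]; apply/forallP => i; apply/forallP => j.
pose x0 := tnth tt i; rewrite !ffunE !(tnth_nth x0); apply/andP; split.
  apply/implyP => /eqP ij; have /(sortedP x0)/(_ i) := sorted_t.
  by rewrite ij size_t; apply.
apply/eqP; rewrite -!(nth_map x0 0 label) ?size_t //; exact: like_t.
Qed.

Lemma has_instance3P p : size p = 3 -> has_instance f p <-> chain3 (strict_anc f) label p.
Proof.
move=> size_p; rewrite has_instanceP size_p.
split=> [[t [size_t sorted_t like]] | [a [b [c [ab bc like]]]]].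
  case: t size_t sorted_t like => [|a [|b [|c [|? ?]]]] //= _ /andP[ab /andP[bc _]] like.
  by exists a, b, c.
by exists [:: a; b; c]; rewrite /= ab bc.
Qed.

Lemma has_instance4P p : size p = 4 -> has_instance f p <-> chain4 (strict_anc f) label p.
Proof.
move=> size_p; rewrite has_instanceP size_p.
split=> [[t [size_t sorted_t like]] | [a [b [c [d [ab bc cd like]]]]]].
  case: t size_t sorted_t like => [|a [|b [|c [|d [|? ?]]]]] //=.
  move=> _ /and3P[ab bc /andP[cd _]] like.
  by exists a, b, c, d.
by exists [:: a; b; c; d]; rewrite /= ab bc cd.
Qed.

Lemma avoids_pair p q : size p = 3 -> size q = 4 ->
  avoids f [:: p; q] <-> ~ chain3 (strict_anc f) label p /\ ~ chain4 (strict_anc f) label q.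
Proof.
move=> size_p size_q; rewrite /avoids /= andbT -(has_instance3P size_p) -(has_instance4P size_q).
by split=> [/andP[/negP no_p /negP no_q] | [/negP no_p /negP no_q]]; last apply/andP.
Qed.
End Instances.

Section FlipForest.
Variable n : nat.
Local Notation label := (@nat_of_ord n).
Variable key : rel 'I_n -> ('I_n -> nat) -> rel 'I_n.
Hypothesis key_ok :
  forall anc, ancestry anc -> forall lam, injective lam -> key_spec anc lam (key anc lam).
Hypothesis key_flip : forall anc, ancestry anc -> forall x u, has_smaller_anc anc label x ->
  key anc (flip_label anc (key anc label)) x u = key anc label x u.
Hypothesis key_relabel : forall (anc anc' : rel 'I_n) s, involutive s ->
  (forall u v, anc' u v = anc (s u) (s v)) ->
  forall lam lam', (forall u, lam' (s u) = lam u) ->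
  forall x u, key anc' lam x u = key anc lam' (s x) (s u).

Definition flip_forest (f : parent_map n) : parent_map n :=
  relabel (flip (strict_anc f) (key (strict_anc f) label)) f.

Section OneForest.
Variable f : parent_map n.
Hypothesis f_forest : is_forest f.
Local Notation anc := (strict_anc f).
Local Notation s := (flip anc (key anc label)).
Local Notation flipped := (flip_label anc (key anc label)).

Let anc_ok := forest_ancestry f_forest.
Let label_key_ok := key_ok anc_ok (@ord_inj n).
Let sK : involutive s := flipK label_key_ok.
Let ancE u v : strict_anc (flip_forest f) u v = anc (s u) (s v) := strict_anc_relabel sK f u v.
Let labelE u : flipped (s u) = label u := congr1 val (sK u).

Lemma is_forest_flip_forest : is_forest (flip_forest f).
Proof. by rewrite is_forest_relabel. Qed.

Lemma flip_forestK : flip_forest (flip_forest f) = f.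
Proof.
set g := flip_forest f.
have lowE : has_smaller_anc (strict_anc g) label =1 has_smaller_anc anc label.
  move=> y; rewrite (has_smaller_anc_relabel sK ancE labelE).
  by rewrite (has_smaller_anc_flip anc_ok label_key_ok) (flip_low label_key_ok).
have keyE x u : has_smaller_anc anc label x ->
    key (strict_anc g) label x u = key anc label (s x) (s u).
  move=> x_low; rewrite (key_relabel sK ancE labelE) (key_flip anc_ok) //.
  by rewrite (flip_low label_key_ok).
have flipE : flip (strict_anc g) (key (strict_anc g) label) =1 s.
  apply: eq_flip lowE _ => x y x_low y_low; rewrite -(same_key_flip label_key_ok x_low y_low).
  by rewrite /same_key (existsb_relabel sK); apply: eq_existsb => u; rewrite !keyE // sK.
by rewrite /flip_forest (eq_relabel flipE) relabelK.
Qed.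

Lemma avoids_flip_forest b p3 p4 q3 q4 :
  size p3 = 3 -> size p4 = 4 -> size q3 = 3 -> size q4 = 4 ->
  (forall lam, injective lam ->
     ~ chain3 anc lam p3 /\ ~ chain4 anc lam p4 <-> key_layered anc lam (key anc lam) b) ->
  (forall lam, injective lam ->
     ~ chain3 anc lam q3 /\ ~ chain4 anc lam q4 <-> key_layered anc lam (key anc lam) (~~ b)) ->
  avoids f [:: p3; p4] -> avoids (flip_forest f) [:: q3; q4].
Proof.
move=> sp3 sp4 sq3 sq4 layered_p layered_q.
rewrite !avoids_pair // (chain3_relabel sK ancE labelE) (chain4_relabel sK ancE labelE).
move/(layered_p _ (@ord_inj n)) => lay.
exact/(layered_q _ (flip_label_inj label_key_ok))/(layered_flip anc_ok label_key_ok lay (key_flip anc_ok)).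
Qed.
End OneForest.

Lemma num_avoiding_le S S' :
  (forall f, is_forest f -> avoids f S -> avoids (flip_forest f) S') ->
  num_avoiding S n <= num_avoiding S' n.
Proof.
move=> flip_avoids; rewrite /num_avoiding -(card_in_imset (f := flip_forest)).
  apply/subset_leq_card/subsetP => _ /imsetP[f /andP[f_forest f_av] ->].
  by rewrite inE is_forest_flip_forest // flip_avoids.
move=> f1 f2 /andP[f1_forest _] /andP[f2_forest _] e12.
by rewrite -(flip_forestK f1_forest) e12 flip_forestK.
Qed.

Variables (p3 p4 q3 q4 : seq nat).
Hypotheses (sp3 : size p3 = 3) (sp4 : size p4 = 4) (sq3 : size q3 = 3) (sq4 : size q4 = 4).
Hypothesis layered_p : forall anc, ancestry anc -> forall lam, injective lam ->
  ~ chain3 anc lam p3 /\ ~ chain4 anc lam p4 <-> key_layered anc lam (key anc lam) true.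
Hypothesis layered_q : forall anc, ancestry anc -> forall lam, injective lam ->
  ~ chain3 anc lam q3 /\ ~ chain4 anc lam q4 <-> key_layered anc lam (key anc lam) false.

Lemma num_avoiding_flip_eq : num_avoiding [:: p3; p4] n = num_avoiding [:: q3; q4] n.
Proof.
apply/eqP; rewrite eqn_leq; apply/andP.
split; apply: num_avoiding_le => f f_forest; have anc_ok := forest_ancestry f_forest.
  exact: avoids_flip_forest (layered_p anc_ok) (layered_q anc_ok).
exact: avoids_flip_forest (layered_q anc_ok) (layered_p anc_ok).
Qed.
End FlipForest.

Theorem theorem3p4 :
  forest_wilf_equiv [:: [:: 1; 2; 3]; [:: 2; 4; 1; 3]] [:: [:: 1; 3; 2]; [:: 2; 3; 1; 4]] /\
  forest_wilf_equiv [:: [:: 1; 2; 3]; [:: 3; 1; 4; 2]] [:: [:: 1; 3; 2]; [:: 3; 1; 2; 4]].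
Proof.
split=> n; apply: num_avoiding_flip_eq => //.
- exact: key_spec_min_anc.
- exact: min_anc_flip.
- exact: min_anc_relabel.
- exact: no_123_2413_iff_layered.
- exact: no_132_2314_iff_layered.
- exact: key_spec_top_smaller_anc.
- exact: top_smaller_anc_flip.
- exact: top_smaller_anc_relabel.
- exact: no_123_3142_iff_layered.
- exact: no_132_3124_iff_layered.
Qed.
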